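(* (Krieger–Shallit) For every real number $\alpha>1$ there exists an infinite sequence over a finite alphabet whose critical exponent equals $\alpha$.
   Context: If $X$ is a nonempty string and $Y$ is a prefix of $X$ (possibly empty), then any string $Z=X X\cdots X Y$ (one or more copies of $X$ followed by $Y$) is called a fractional power of $X$, and $|Z|/|X|$ is its exponent. The critical exponent of an infinite sequence $\omega$ is the least upper bound of the exponents of all fractional powers that occur as substrings (blocks of consecutive letters) of $\omega$. *)

From Stdlib Require Import Reals.
Open Scope R_scope.

(* An infinite sequence over alphabet A is a function nat -> A.
   [fractional_power_at w i n p] : the block w(i) w(i+1) ... w(i+n-1) of
   length n is a fractional power X X ... X Y with |X| = p >= 1
   (one or more copies of X, Y a possibly empty prefix of X), i.e.
   p <= n and each letter equals the letter p positions before it. *)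
Definition fractional_power_at {A : Type} (w : nat -> A) (i n p : nat) : Prop :=
  (1 <= p)%nat /\ (p <= n)%nat /\
  forall j : nat, (p <= j)%nat -> (j < n)%nat -> w (i + j)%nat = w (i + j - p)%nat.

Definition exponents {A : Type} (w : nat -> A) (r : R) : Prop :=
  exists i n p : nat, fractional_power_at w i n p /\ r = INR n / INR p.

Definition critical_exponent_eq {A : Type} (w : nat -> A) (alpha : R) : Prop :=
  is_lub (exponents w) alpha.

(* The base word [j |-> base_letter L j] has critical exponent close to 1. If
   [L ^ t] divides the period [p] exactly, a repetition compares positions that
   agree modulo [L ^ t] but not modulo [L ^ (t + 1)], and any stretch longer than
   [p / L] contains a position whose letter exposes the disagreement.
   At the sparse positions [L ^ (3k + 3)] we insert windows of length
   [floor (alpha * L ^ (k + 2))] repeating the base word with period [L ^ (k + 2)]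
   over a disjoint copy of the alphabet: they have exponents tending to [alpha].
   A repetition inside one window is short unless its period is a multiple of
   the window's; any other repetition is cut by the change of alphabet into at
   most three pieces of length at most [p / L], hence has exponent at most
   [1 + 3 / L <= alpha] once [L] is large. *)

From Stdlib Require Import Reals.
Open Scope R_scope.
From Stdlib Require Import Arith Lia Lra ZArith Classical ClassicalEpsilon.

Section BaseWord.
Open Scope nat_scope.

Variable L : nat.
Hypothesis HL : 2 <= L.

Lemma pow_L_neq0 k : L ^ k <> 0.
Proof. apply Nat.pow_nonzero; lia. Qed.

Lemma mod_pow_le a b i j : i <= j -> a mod L ^ j = b mod L ^ j -> a mod L ^ i = b mod L ^ i.
Proof.
  intros Hij H.
  replace j with (i + (j - i)) in H by lia.
  rewrite Nat.pow_add_r, !Nat.Div0.mod_mul_r in H.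
  apply (f_equal (fun x => x mod L ^ i)) in H.
  rewrite !(Nat.mul_comm (L ^ i)), !Nat.Div0.mod_add, !Nat.Div0.mod_mod in H. exact H.
Qed.

Lemma mod_pow_le0 a i j : i <= j -> a mod L ^ j = 0 -> a mod L ^ i = 0.
Proof.
  intros Hij H. rewrite <- (Nat.Div0.mod_0_l (L ^ i)).
  apply (mod_pow_le a 0 i j Hij). now rewrite Nat.Div0.mod_0_l.
Qed.

Lemma mod_pow_sub_pow_mod t m n x : t <= m -> t <= n -> L ^ n <= x ->
  ((x - L ^ n) mod L ^ m) mod L ^ t = x mod L ^ t.
Proof.
  intros Htm Htn Hx.
  rewrite (mod_pow_le _ (x - L ^ n) t m Htm (Nat.Div0.mod_mod _ _)).
  replace x with (x - L ^ n + L ^ (n - t) * L ^ t) at 2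
    by (rewrite <- Nat.pow_add_r; replace (n - t + t) with n by lia; lia).
  now rewrite Nat.Div0.mod_add.
Qed.

Definition has_valuation (t p : nat) : Prop := p mod L ^ t = 0 /\ p mod L ^ S t <> 0.

Lemma has_valuation_exists p : 1 <= p -> exists t, has_valuation t p.
Proof.
  induction p as [p IH] using (well_founded_induction lt_wf). intros Hp.
  destruct (Nat.eq_dec (p mod L) 0) as [H0|H0].
  - assert (Hp' : p = L * (p / L)) by (apply Nat.Div0.div_exact; exact H0).
    assert (Hq1 : 1 <= p / L) by (destruct (p / L); lia).
    assert (Hqlt : p / L < p) by (apply Nat.div_lt; lia).
    destruct (IH (p / L) Hqlt Hq1) as [t [Ht1 Ht2]].
    exists (S t). unfold has_valuation. rewrite Hp'. cbn [Nat.pow].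
    rewrite !Nat.Div0.mul_mod_distr_l, Ht1. split; [lia|].
    intro Hc. apply Nat.mul_eq_0 in Hc. destruct Hc; [lia|]. now apply Ht2.
  - exists 0. unfold has_valuation. rewrite Nat.pow_0_r, Nat.pow_1_r.
    split; [apply Nat.mod_1_r | exact H0].
Qed.

Lemma has_valuation_ge t p : has_valuation t p -> L ^ t <= p.
Proof.
  intros [H1 H2]. apply Nat.Div0.mod_divides in H1. destruct H1 as [[|c] Hc].
  - rewrite Hc, Nat.mul_0_r, Nat.Div0.mod_0_l in H2. lia.
  - nia.
Qed.

(* The fuel [f] is never exhausted when [f = a] (see [valuation_spec]). *)
Fixpoint valuation_aux (f a : nat) : nat :=
  match f with
  | O => O
  | S f' => if Nat.eqb (a mod L) 0 then S (valuation_aux f' (a / L)) else O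
  end.
Definition valuation a := valuation_aux a a.

Lemma valuation_aux_spec u : forall f a, u <= f -> has_valuation u a -> valuation_aux f a = u.
Proof.
  induction u as [|u IH]; intros f a Hf [H1 H2].
  - destruct f; cbn; [reflexivity|]. cbn in H2. rewrite Nat.mul_1_r in H2.
    destruct (Nat.eqb_spec (a mod L) 0); [contradiction|reflexivity].
  - destruct f as [|f]; [lia|]. cbn.
    assert (HaL : a mod L = 0).
    { rewrite <- (Nat.pow_1_r L). apply (mod_pow_le0 a 1 (S u)); [lia|exact H1]. }
    rewrite HaL. cbn. f_equal.
    assert (Ha : a = L * (a / L)) by (apply Nat.Div0.div_exact; exact HaL).
    rewrite Ha in H1, H2. cbn [Nat.pow] in H1, H2.
    rewrite Nat.Div0.mul_mod_distr_l in H1, H2.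
    apply IH; [lia|split].
    + apply Nat.mul_eq_0 in H1. destruct H1; [lia|assumption].
    + intro Hc. apply H2. cbn [Nat.pow] in Hc |- *. rewrite Hc. lia.
Qed.

Lemma valuation_spec a u : has_valuation u a -> valuation a = u.
Proof.
  intros Hu. apply valuation_aux_spec; [|exact Hu].
  assert (u < L ^ u) by (apply Nat.pow_gt_lin_r; lia).
  assert (L ^ u <= a) by (apply has_valuation_ge; exact Hu). lia.
Qed.

Lemma has_valuation_mod u a b : a mod L ^ S u = b mod L ^ S u ->
  has_valuation u a -> has_valuation u b.
Proof.
  intros Hab [H1 H2]. split.
  - rewrite <- (mod_pow_le a b u (S u)); [exact H1 | lia | exact Hab].
  - now rewrite <- Hab.
Qed.

(* The letter at position [a] records the two lowest base-[L] digits of [a]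
   and the three digits starting at its lowest nonzero one. *)
Definition base_letter a := a mod L ^ 2 + ((a / L ^ valuation a) mod L ^ 3) * L ^ 2.

Lemma base_letter_lt a : base_letter a < L ^ 5.
Proof.
  unfold base_letter.
  assert (H1 := Nat.mod_upper_bound a (L ^ 2) (pow_L_neq0 2)).
  assert (H2 := Nat.mod_upper_bound (a / L ^ valuation a) (L ^ 3) (pow_L_neq0 3)).
  replace (L ^ 5) with (L ^ 3 * L ^ 2) by (rewrite <- Nat.pow_add_r; reflexivity).
  nia.
Qed.

Lemma base_letter_eq_digits a b : base_letter a = base_letter b ->
  a mod L ^ 2 = b mod L ^ 2 /\
  (a / L ^ valuation a) mod L ^ 3 = (b / L ^ valuation b) mod L ^ 3.
Proof.
  unfold base_letter. intros H.
  assert (H1 := Nat.mod_upper_bound a (L ^ 2) (pow_L_neq0 2)).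
  assert (H1' := Nat.mod_upper_bound b (L ^ 2) (pow_L_neq0 2)).
  split.
  - apply (f_equal (fun x => x mod L ^ 2)) in H.
    rewrite !Nat.Div0.mod_add, !Nat.Div0.mod_mod in H. exact H.
  - apply (f_equal (fun x => x / L ^ 2)) in H.
    rewrite !Nat.div_add, !(Nat.div_small (_ mod L ^ 2)) in H
      by (assumption || apply pow_L_neq0). exact H.
Qed.

Lemma base_letter_neq u a b : has_valuation u a ->
  a mod L ^ (u + 2) = b mod L ^ (u + 2) -> a mod L ^ (u + 3) <> b mod L ^ (u + 3) ->
  base_letter a <> base_letter b.
Proof.
  intros Ha Hlow Hhigh Hab. apply base_letter_eq_digits in Hab. destruct Hab as [_ Hab].
  assert (Hb : has_valuation u b).
  { apply (has_valuation_mod u a); [apply (mod_pow_le a b (S u) (u + 2)); lia|exact Ha]. }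
  rewrite (valuation_spec a u Ha), (valuation_spec b u Hb) in Hab.
  apply Hhigh. rewrite Nat.pow_add_r.
  assert (Ea : a = L ^ u * (a / L ^ u)) by (apply Nat.Div0.div_exact, Ha).
  assert (Eb : b = L ^ u * (b / L ^ u)) by (apply Nat.Div0.div_exact, Hb).
  rewrite Ea at 1. rewrite Eb at 1.
  now rewrite !Nat.Div0.mul_mod_distr_l, Hab.
Qed.

Lemma mod_add_neq b q M : q mod M <> 0 -> (b + q) mod M <> b mod M.
Proof.
  intros Hq. destruct (Nat.eq_dec M 0) as [->|HM]; [rewrite !Nat.mod_0_r in *; lia|].
  rewrite Nat.Div0.add_mod.
  assert (Hr := Nat.mod_upper_bound b M HM).
  assert (Hs := Nat.mod_upper_bound q M HM).
  destruct (Nat.lt_ge_cases (b mod M + q mod M) M).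
  - rewrite Nat.mod_small; lia.
  - replace (b mod M + q mod M) with ((b mod M + q mod M - M) + 1 * M) by lia.
    rewrite Nat.Div0.mod_add, Nat.mod_small; lia.
Qed.

Lemma interval_has_residue s M r : r < M -> exists o, s <= o < s + M /\ o mod M = r.
Proof.
  intros HrM. assert (HM : M <> 0) by lia.
  assert (Hd := Nat.div_mod s M HM).
  assert (Hm := Nat.mod_upper_bound s M HM).
  destruct (Nat.le_gt_cases s (M * (s / M) + r)).
  - exists (r + s / M * M). split; [lia|].
    rewrite Nat.Div0.mod_add, Nat.mod_small; lia.
  - exists (r + (s / M + 1) * M). split; [lia|].
    rewrite Nat.Div0.mod_add, Nat.mod_small; lia.
Qed.

Lemma congruent_shift t p x y j : has_valuation t p ->
  x mod L ^ S t = j mod L ^ S t -> (y + p) mod L ^ S t = j mod L ^ S t ->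
  x mod L ^ t = y mod L ^ t /\ x mod L ^ S t <> y mod L ^ S t.
Proof.
  intros [Hp1 Hp2] Hx Hy. split.
  - rewrite (mod_pow_le x j t (S t)), <- (mod_pow_le (y + p) j t (S t)) by (lia || assumption).
    assert (Ep : p = L ^ t * (p / L ^ t)) by (apply Nat.Div0.div_exact, Hp1).
    rewrite Ep, Nat.mul_comm, Nat.Div0.mod_add. reflexivity.
  - rewrite Hx, <- Hy. now apply mod_add_neq.
Qed.

(* [f j] and [g j] stand for [j] and [j - p] modulo [L ^ S t]: this congruence is
   all the argument uses, so the lemma also applies to the shifted copies of the
   base word inside windows. *)
Lemma base_letter_run_short t p s l (f g : nat -> nat) : has_valuation t p ->
  (forall j, s <= j < s + l ->
     f j mod L ^ S t = j mod L ^ S t /\ (g j + p) mod L ^ S t = j mod L ^ S t /\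
     base_letter (f j) = base_letter (g j)) ->
  L * l <= p.
Proof.
  intros Hp Hall.
  destruct (Nat.le_gt_cases (L * l) p) as [Hle|Hgt]; [exact Hle|exfalso].
  assert (Hpge := has_valuation_ge t p Hp).
  destruct (Nat.lt_ge_cases t 2) as [Ht|Ht].
  - destruct (Hall s ltac:(nia)) as [Hf [Hg Hfg]].
    destruct (congruent_shift t p (f s) (g s) s Hp Hf Hg) as [_ Hne].
    apply Hne, (mod_pow_le _ _ (S t) 2); [lia|].
    now apply base_letter_eq_digits in Hfg.
  - set (u := t - 2) in *. replace t with (u + 2) in * by lia.
    assert (Hl : L ^ S u < l).
    { rewrite Nat.pow_add_r in Hpge. cbn [Nat.pow] in Hgt, Hpge |- *. nia. }
    destruct (interval_has_residue s (L ^ S u) (L ^ u)) as [o [Ho Hou]].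
    { apply Nat.pow_lt_mono_r; lia. }
    destruct (Hall o ltac:(lia)) as [Hf [Hg Hfg]].
    destruct (congruent_shift _ p (f o) (g o) o Hp Hf Hg) as [Hlow Hhigh].
    revert Hfg. apply (base_letter_neq u); [|exact Hlow|].
    2: now replace (u + 3) with (S (u + 2)) by lia.
    apply (has_valuation_mod u o).
    + symmetry. apply (mod_pow_le _ _ (S u) (S (u + 2))); [lia|exact Hf].
    + split; [|rewrite Hou; apply pow_L_neq0].
      rewrite (mod_pow_le o (L ^ u) u (S u)); [apply Nat.Div0.mod_same|lia|].
      rewrite Hou, Nat.mod_small; [reflexivity|apply Nat.pow_lt_mono_r; lia].
Qed.
End BaseWord.

Section Word.
Open Scope nat_scope.

Variable L : nat.
Hypothesis HL : 4 <= L.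
Variable nk : nat -> nat.
Hypothesis Hnk : forall k, nk k <= L ^ (k + 3).

Let HL2 : 2 <= L. Proof. lia. Qed.

Definition window_start k := L ^ (3 * k + 3).
Definition window_period k := L ^ (k + 2).
Definition window_end k := window_start k + nk k.
Definition in_window k j := window_start k <= j < window_end k.

Lemma window_start_le k1 k2 : k1 <= k2 -> window_start k1 <= window_start k2.
Proof. intros H. apply Nat.pow_le_mono_r; lia. Qed.

Lemma window_start_pos k : 1 <= window_start k.
Proof. assert (H := pow_L_neq0 L HL2 (3 * k + 3)). unfold window_start. lia. Qed.

Lemma window_length_le_start k : nk k <= window_start k.
Proof. eapply Nat.le_trans; [apply Hnk|]. apply Nat.pow_le_mono_r; lia. Qed.

Lemma window_end_gap k : 2 * L * window_end k <= window_start (S k).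
Proof.
  assert (H := window_length_le_start k). unfold window_end.
  assert (E : window_start (S k) = L ^ 3 * window_start k).
  { unfold window_start. rewrite <- Nat.pow_add_r. f_equal. lia. }
  rewrite E. assert (4 * L <= L ^ 3) by (cbn; nia). nia.
Qed.

Lemma window_end_gap_lt k1 k2 : k1 < k2 -> 2 * L * window_end k1 <= window_start k2.
Proof.
  intros H. induction k2 as [|k2 IH]; [lia|].
  destruct (Nat.eq_dec k1 k2) as [->|Hne]; [apply window_end_gap|].
  assert (H1 := IH ltac:(lia)). assert (H2 := window_end_gap k2).
  unfold window_end in *. nia.
Qed.

Lemma window_end_lt_next k : window_end k < window_start (S k).
Proof.
  assert (H := window_end_gap k). assert (H1 := window_start_pos k).
  unfold window_end in *. nia.
Qed.

Lemma in_window_mono k1 k2 j1 j2 : in_window k1 j1 -> in_window k2 j2 -> j1 <= j2 -> k1 <= k2.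
Proof.
  unfold in_window. intros H1 H2 Hj.
  destruct (Nat.le_gt_cases k1 k2) as [H|H]; [exact H|].
  assert (G := window_end_gap_lt k2 k1 H). nia.
Qed.

Lemma in_window_unique k1 k2 j : in_window k1 j -> in_window k2 j -> k1 = k2.
Proof.
  intros H1 H2. apply Nat.le_antisymm; eapply in_window_mono; eauto.
Qed.

Lemma gap_not_in_window k j : window_end k <= j < window_start (S k) -> forall k', ~ in_window k' j.
Proof.
  intros Hj k' Hk'.
  destruct (Nat.le_gt_cases k' k) as [H|H].
  - assert (window_start k' <= window_start k) by (apply window_start_le; exact H).
    destruct (Nat.eq_dec k' k) as [->|Hne]; [unfold in_window in Hk'; lia|].
    assert (G := window_end_gap_lt k' k ltac:(lia)). unfold in_window, window_end in *. nia.
  - assert (window_start (S k) <= window_start k') by (apply window_start_le; exact H).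
    unfold in_window in Hk'. lia.
Qed.

Lemma before_window_not_in_window k : forall k', ~ in_window k' (window_start k - 1).
Proof.
  destruct k as [|m]; intros k' Hk'.
  - assert (H := window_start_le 0 k' ltac:(lia)). assert (H1 := window_start_pos 0).
    unfold in_window in Hk'. lia.
  - apply (gap_not_in_window m (window_start (S m) - 1)) with k'; [|exact Hk'].
    assert (H := window_end_lt_next m). lia.
Qed.

Definition word (j : nat) : nat :=
  match excluded_middle_informative (exists k, in_window k j) with
  | left H => let k := proj1_sig (constructive_indefinite_description _ H) in
              L ^ 5 + base_letter L ((j - window_start k) mod window_period k)
  | right _ => base_letter L j
  end.

Lemma word_in k j : in_window k j ->
  word j = L ^ 5 + base_letter L ((j - window_start k) mod window_period k).
Proof.
  intros H. unfold word. destruct excluded_middle_informative as [H'|H'].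
  - destruct constructive_indefinite_description as [k' Hk']. cbn.
    now rewrite (in_window_unique _ _ _ Hk' H).
  - exfalso. apply H'. now exists k.
Qed.

Lemma word_out j : (forall k, ~ in_window k j) -> word j = base_letter L j.
Proof.
  intros H. unfold word. destruct excluded_middle_informative as [[k Hk]|_]; [|reflexivity].
  exfalso. exact (H k Hk).
Qed.

Lemma word_lt j : word j < 2 * L ^ 5.
Proof.
  destruct (classic (exists k, in_window k j)) as [[k Hk]|Hout].
  - rewrite (word_in k j Hk).
    assert (H := base_letter_lt L HL2 ((j - window_start k) mod window_period k)). lia.
  - rewrite word_out by (intros k Hk; apply Hout; now exists k).
    assert (H := base_letter_lt L HL2 j). lia.
Qed.

Lemma word_in_out_neq k j j' : in_window k j -> (forall k', ~ in_window k' j') -> word j <> word j'.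
Proof.
  intros H1 H2. rewrite (word_in k j H1), (word_out j' H2).
  assert (H := base_letter_lt L HL2 j'). lia.
Qed.

Section Run.
Variables s e p : nat.
Hypothesis Hp : 1 <= p.
Hypothesis Hps : p <= s.
Hypothesis Hrun : forall j, s <= j < e -> word j = word (j - p).

Lemma run_in_window k j : s <= j < e -> in_window k j -> exists k', in_window k' (j - p).
Proof.
  intros Hj Hk. apply NNPP. intros Hout.
  apply (word_in_out_neq k j (j - p) Hk); [|now apply Hrun].
  intros k' Hk'. apply Hout. now exists k'.
Qed.

Lemma run_in_window_back k j : s <= j < e -> in_window k (j - p) -> exists k', in_window k' j.
Proof.
  intros Hj Hk. apply NNPP. intros Hout.
  apply (word_in_out_neq k (j - p) j Hk); [|symmetry; now apply Hrun].
  intros k' Hk'. apply Hout. now exists k'.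
Qed.

Lemma outside_block_short s' l :
  (forall j, s' <= j < s' + l -> s <= j < e /\ forall k, ~ in_window k j) -> L * l <= p.
Proof.
  intros Hall. destruct (has_valuation_exists L HL2 p Hp) as [t Ht].
  apply (base_letter_run_short L HL2 t p s' l (fun j => j) (fun j => j - p) Ht).
  intros j Hj. destruct (Hall j Hj) as [Hj1 Hout].
  assert (Hout' : forall k, ~ in_window k (j - p)).
  { intros k Hk. destruct (run_in_window_back k j Hj1 Hk) as [k' Hk']. exact (Hout k' Hk'). }
  split; [reflexivity|]. split; [f_equal; lia|].
  rewrite <- (word_out j Hout), <- (word_out (j - p) Hout'). now apply Hrun.
Qed.

Lemma window_block_short k s' l :
  (forall j, s' <= j < s' + l -> s <= j < e /\ in_window k j /\ in_window k (j - p)) ->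
  p mod window_period k <> 0 -> L * l <= p.
Proof.
  intros Hall HPk. destruct (has_valuation_exists L HL2 p Hp) as [t Ht].
  assert (Htk : S t <= k + 2).
  { destruct (Nat.le_gt_cases (S t) (k + 2)) as [H|H]; [exact H|].
    exfalso. apply HPk, (mod_pow_le0 L HL2 p (k + 2) t); [lia|apply Ht]. }
  apply (base_letter_run_short L HL2 t p s' l
           (fun j => (j - window_start k) mod window_period k)
           (fun j => (j - p - window_start k) mod window_period k) Ht).
  intros j Hj. destruct (Hall j Hj) as [Hj1 [Hj2 Hj3]].
  split; [|split].
  - unfold in_window, window_end, window_start, window_period in *.
    apply mod_pow_sub_pow_mod; lia.
  - unfold in_window, window_end, window_start, window_period in *.
    rewrite <- Nat.Div0.add_mod_idemp_l, mod_pow_sub_pow_mod by lia.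
    rewrite Nat.Div0.add_mod_idemp_l. f_equal. lia.
  - assert (E := Hrun j Hj1). rewrite (word_in k j Hj2), (word_in k (j - p) Hj3) in E. lia.
Qed.

Lemma gap_not_inside_run m : s <= window_end m -> window_start (S m) <= e -> False.
Proof.
  intros Hs He.
  assert (H : L * (window_start (S m) - window_end m) <= p).
  { apply (outside_block_short (window_end m)). intros j Hj. split; [lia|].
    apply (gap_not_in_window m). lia. }
  assert (G := window_end_gap m). assert (G1 := window_start_pos m).
  unfold window_end in *. nia.
Qed.

Lemma run_inside_window k j0 : s <= j0 < e -> in_window k j0 -> in_window k (j0 - p) ->
  L * (e - s) <= p \/ e - s + p <= nk k /\ window_period k <= p.
Proof.
  intros Hj0 Hk1 Hk2.
  assert (He : e <= window_end k).
  { destruct (Nat.le_gt_cases e (window_end k)) as [H|H]; [exact H|exfalso].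
    apply (word_in_out_neq k (window_end k - p) (window_end k)).
    - unfold in_window in *. lia.
    - apply (gap_not_in_window k). assert (G := window_end_lt_next k). lia.
    - symmetry. apply Hrun. unfold in_window in *. lia. }
  assert (Hs : window_start k + p <= s).
  { destruct (Nat.le_gt_cases (window_start k + p) s) as [H|H]; [exact H|exfalso].
    assert (Ha := window_start_pos k).
    apply (word_in_out_neq k (window_start k + p - 1) (window_start k + p - 1 - p)).
    - unfold in_window in *. lia.
    - replace (window_start k + p - 1 - p) with (window_start k - 1) by lia.
      apply before_window_not_in_window.
    - apply Hrun. unfold in_window in *. lia. }
  destruct (Nat.eq_dec (p mod window_period k) 0) as [H0|H0].
  - right. unfold window_end in He. split; [lia|].
    apply Nat.Div0.mod_divides in H0. destruct H0 as [[|c] Hc]; nia.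
  - left. apply (window_block_short k s (e - s)); [|exact H0].
    intros j Hj. unfold in_window in *. lia.
Qed.

(* The block is matched against an earlier window [k1], so it is no longer than
   that window, while [p] spans the gap following it. *)
Lemma cross_window_block_short k s' e' :
  (forall j k', s <= j < e -> in_window k' j -> ~ in_window k' (j - p)) ->
  s <= s' -> e' <= e -> window_start k <= s' -> e' <= window_end k ->
  L * (e' - s') <= p.
Proof.
  intros Hcross Hs' He' Hk1 Hk2.
  destruct (Nat.le_gt_cases e' s') as [H|H]; [replace (e' - s') with 0 by lia; lia|].
  assert (Hin : in_window k s') by (unfold in_window; lia).
  destruct (run_in_window k s' ltac:(lia) Hin) as [k1 Hin1].
  assert (Hk : k1 < k).
  { assert (k1 <= k) by (apply (in_window_mono _ _ _ _ Hin1 Hin); lia).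
    destruct (Nat.eq_dec k1 k) as [->|]; [|lia].
    exfalso. exact (Hcross s' k ltac:(lia) Hin Hin1). }
  assert (He1 : e' - p <= window_end k1).
  { destruct (Nat.le_gt_cases (e' - p) (window_end k1)) as [H'|H']; [exact H'|exfalso].
    apply (word_in_out_neq k (window_end k1 + p) (window_end k1 + p - p)).
    - unfold in_window in *. lia.
    - replace (window_end k1 + p - p) with (window_end k1) by lia.
      apply (gap_not_in_window k1). assert (G := window_end_lt_next k1). lia.
    - apply Hrun. unfold in_window in *. lia. }
  assert (G := window_end_gap_lt k1 k Hk).
  unfold in_window, window_end in *. nia.
Qed.

Lemma run_across_windows j0 k : s <= j0 < e -> in_window k j0 ->
  (forall j k', s <= j < e -> in_window k' j -> ~ in_window k' (j - p)) ->
  L * (e - s) <= 3 * p.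
Proof.
  intros Hj0 Hk Hcross.
  destruct (run_in_window k j0 Hj0 Hk) as [k1 Hk1].
  assert (Hlt : k1 < k).
  { assert (k1 <= k) by (apply (in_window_mono _ _ _ _ Hk1 Hk); lia).
    destruct (Nat.eq_dec k1 k) as [->|]; [|lia].
    exfalso. exact (Hcross j0 k Hj0 Hk Hk1). }
  destruct k as [|m]; [lia|].
  assert (Hs : window_end m < s).
  { destruct (Nat.le_gt_cases s (window_end m)) as [H|H]; [exfalso|exact H].
    apply (gap_not_inside_run m H). unfold in_window in Hk. lia. }
  assert (He : e <= window_start (S (S m))).
  { destruct (Nat.le_gt_cases e (window_start (S (S m)))) as [H|H]; [exact H|exfalso].
    apply (gap_not_inside_run (S m)); [unfold in_window in Hk|]; lia. }
  assert (H1 : L * (window_start (S m) - s) <= p).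
  { apply (outside_block_short s). intros j Hj. unfold in_window in Hk.
    split; [lia|]. apply (gap_not_in_window m). lia. }
  assert (H2 : L * (Nat.min e (window_end (S m)) - Nat.max s (window_start (S m))) <= p).
  { apply (cross_window_block_short (S m)); [exact Hcross|lia..]. }
  assert (H3 : L * (e - window_end (S m)) <= p).
  { apply (outside_block_short (window_end (S m))). intros j Hj. unfold in_window in Hk.
    split; [lia|]. apply (gap_not_in_window (S m)). lia. }
  assert (Hsplit : e - s <= (window_start (S m) - s)
      + (Nat.min e (window_end (S m)) - Nat.max s (window_start (S m)))
      + (e - window_end (S m))) by lia.
  apply (Nat.mul_le_mono_l _ _ L) in Hsplit. rewrite !Nat.mul_add_distr_l in Hsplit. lia.
Qed.

Lemma run_bound : L * (e - s) <= 3 * p \/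
  exists k, e - s + p <= nk k /\ window_period k <= p.
Proof.
  destruct (classic (exists j k, s <= j < e /\ in_window k j /\ in_window k (j - p)))
    as [[j0 [k [Hj0 [Hk1 Hk2]]]] | Hcross].
  - destruct (run_inside_window k j0 Hj0 Hk1 Hk2) as [H|H]; [left; lia|right; now exists k].
  - left.
    destruct (classic (exists j k, s <= j < e /\ in_window k j)) as [[j0 [k [Hj0 Hk]]] | Hout].
    + apply (run_across_windows j0 k Hj0 Hk).
      intros j k' Hj Hk1 Hk2. apply Hcross. now exists j, k'.
    + enough (L * (e - s) <= p) by lia.
      apply (outside_block_short s). intros j Hj. split; [lia|].
      intros k Hk. apply Hout. exists j, k. split; [lia|exact Hk].
Qed.
End Run.

Lemma fractional_power_bound i n p : fractional_power_at word i n p ->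
  L * (n - p) <= 3 * p \/ exists k, n <= nk k /\ window_period k <= p.
Proof.
  intros [Hp [Hpn Hper]].
  assert (Hrun : forall j, i + p <= j < i + n -> word j = word (j - p)).
  { intros j Hj. replace j with (i + (j - i)) by lia. apply Hper; lia. }
  destruct (run_bound (i + p) (i + n) p Hp ltac:(lia) Hrun) as [H|[k [H1 H2]]].
  - left. now replace (n - p) with (i + n - (i + p)) by lia.
  - right. exists k. split; [lia|exact H2].
Qed.

Lemma window_fractional_power k : window_period k <= nk k ->
  fractional_power_at word (window_start k) (nk k) (window_period k).
Proof.
  intros Hk. assert (HP := pow_L_neq0 L HL2 (k + 2)). fold (window_period k) in HP.
  split; [lia|]. split; [exact Hk|]. intros j Hj1 Hj2.
  rewrite !(word_in k) by (unfold in_window, window_end; lia).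
  replace (window_start k + j - window_start k)
    with ((j - window_period k) + 1 * window_period k) by lia.
  replace (window_start k + j - window_period k - window_start k)
    with (j - window_period k) by lia.
  now rewrite Nat.Div0.mod_add.
Qed.
End Word.

Lemma exists_nat_floor x : 0 <= x -> exists m : nat, INR m <= x < INR m + 1.
Proof.
  intros Hx. destruct (base_Int_part x) as [H1 H2].
  assert (Hz : (0 <= Int_part x)%Z).
  { apply Z.lt_succ_r, lt_IZR. rewrite succ_IZR. lra. }
  exists (Z.to_nat (Int_part x)). rewrite INR_IZR_INZ, Z2Nat.id by exact Hz. lra.
Qed.

Lemma INR_pow_ge1 L k : (1 <= L)%nat -> 1 <= INR (L ^ k).
Proof.
  intros HL. rewrite <- INR_1. apply le_INR.
  assert (L ^ k <> 0)%nat by (apply Nat.pow_nonzero; lia). lia.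
Qed.

Section Exponent.
Variable alpha : R.
Variable L : nat.
Hypothesis HL : (4 <= L)%nat.
Hypothesis HLalpha : alpha <= INR L.
Hypothesis HLgap : 3 <= INR L * (alpha - 1).
Variable nk : nat -> nat.
Hypothesis Hfloor : forall k, INR (nk k) <= alpha * INR (window_period L k) < INR (nk k) + 1.

Lemma alpha_gt_1 : 1 < alpha.
Proof. assert (0 < INR L) by (apply lt_0_INR; lia). nra. Qed.

Lemma window_length_bound k : (nk k <= L ^ (k + 3))%nat.
Proof.
  apply INR_le. destruct (Hfloor k) as [H _]. unfold window_period in H.
  replace (k + 3)%nat with (S (k + 2)) by lia. rewrite Nat.pow_succ_r', mult_INR.
  assert (0 <= INR (L ^ (k + 2))) by apply pos_INR. nra.
Qed.

Lemma window_period_le k : (window_period L k <= nk k)%nat.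
Proof.
  apply Nat.lt_succ_r, INR_lt. rewrite S_INR. destruct (Hfloor k) as [_ H].
  assert (1 <= INR (window_period L k)) by (apply INR_pow_ge1; lia).
  assert (H1 := alpha_gt_1). nra.
Qed.

Lemma exponents_le r : exponents (word L nk) r -> r <= alpha.
Proof.
  intros [i [n [p [Hfp ->]]]].
  assert (HpR : 0 < INR p) by (apply lt_0_INR; destruct Hfp; lia).
  assert (Hpn : (p <= n)%nat) by apply Hfp.
  apply (Rmult_le_reg_r (INR p)); [exact HpR|].
  unfold Rdiv. rewrite Rmult_assoc, Rinv_l, Rmult_1_r by lra.
  destruct (fractional_power_bound L HL nk window_length_bound i n p Hfp) as [H|[k [H1 H2]]].
  - apply le_INR in H. rewrite !mult_INR, minus_INR in H by exact Hpn.
    replace (INR 3) with 3 in H by (cbn; ring).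
    assert (3 * INR p <= INR L * (alpha - 1) * INR p) by (apply Rmult_le_compat_r; lra).
    assert (0 < INR L) by (apply lt_0_INR; lia).
    nra.
  - apply le_INR in H1, H2. destruct (Hfloor k) as [H3 _].
    assert (alpha * INR (window_period L k) <= alpha * INR p)
      by (apply Rmult_le_compat_l; [assert (H := alpha_gt_1); lra|exact H2]).
    lra.
Qed.

Lemma exponents_approach b : b < alpha -> exists r, exponents (word L nk) r /\ b < r.
Proof.
  intros Hb. destruct (INR_unbounded (1 / (alpha - b))) as [K HK].
  set (P := window_period L K).
  assert (HP1 : 1 <= INR P) by (apply INR_pow_ge1; lia).
  assert (HKP : INR K <= INR P).
  { apply le_INR. assert (K < L ^ K)%nat by (apply Nat.pow_gt_lin_r; lia).
    assert (L ^ K <= L ^ (K + 2))%nat by (apply Nat.pow_le_mono_r; lia).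
    unfold P, window_period. lia. }
  exists (INR (nk K) / INR P). split.
  { exists (window_start L K), (nk K), P. split; [|reflexivity].
    apply window_fractional_power; [exact HL|exact window_length_bound|apply window_period_le]. }
  destruct (Hfloor K) as [_ H]. fold P in H.
  assert (1 < (alpha - b) * INR P).
  { apply (Rmult_lt_compat_l (alpha - b)) in HK; [|lra].
    unfold Rdiv in HK. rewrite Rmult_1_l, Rinv_r in HK by lra.
    assert ((alpha - b) * INR K <= (alpha - b) * INR P) by (apply Rmult_le_compat_l; lra).
    lra. }
  apply (Rmult_lt_reg_r (INR P)); [lra|].
  unfold Rdiv. rewrite Rmult_assoc, Rinv_l, Rmult_1_r by lra. lra.
Qed.

Lemma critical_exponent_word : critical_exponent_eq (word L nk) alpha.
Proof.
  split; [exact exponents_le|].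
  intros b Hb. apply Rnot_lt_le. intros Hlt.
  destruct (exponents_approach b Hlt) as [r [Hr Hbr]].
  specialize (Hb r Hr). lra.
Qed.
End Exponent.

Lemma exists_large_base alpha : 1 < alpha ->
  exists L : nat, (4 <= L)%nat /\ alpha <= INR L /\ 3 <= INR L * (alpha - 1).
Proof.
  intros Halpha. destruct (INR_unbounded (alpha + 3 / (alpha - 1))) as [N HN].
  exists (N + 4)%nat. rewrite plus_INR. replace (INR 4) with 4 by (cbn; ring).
  assert (Hgap : 3 / (alpha - 1) > 0) by (apply Rdiv_lt_0_compat; lra).
  split; [lia|split; [lra|]].
  replace 3 with (3 / (alpha - 1) * (alpha - 1)) at 1 by (field; lra).
  apply Rmult_le_compat_r; lra.
Qed.

Theorem theorem2 (alpha : R) (halpha : 1 < alpha) :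
  exists (k : nat) (w : nat -> nat),
    (forall i : nat, (w i < k)%nat) /\ critical_exponent_eq w alpha.
Proof.
  destruct (exists_large_base alpha halpha) as [L [HL [HLalpha HLgap]]].
  assert (Hfloor : forall k, exists m : nat,
      INR m <= alpha * INR (window_period L k) < INR m + 1).
  { intros k. apply exists_nat_floor.
    assert (1 <= INR (window_period L k)) by (apply INR_pow_ge1; lia). nra. }
  destruct (choice _ Hfloor) as [nk Hnk].
  exists (2 * L ^ 5)%nat, (word L nk). split.
  - intros i. apply (word_lt L HL nk), (window_length_bound alpha L); assumption.
  - apply critical_exponent_word; assumption.
Qed.
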